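(* Let $\kappa, m, n$ be positive integers and $s$ a nonnegative integer such that $\kappa^4 m^4 n^4 - 32\kappa(m^2+n^2) = s^2$. Let $\beta$ be a positive integer. If $\kappa^2 m^2 n^2 - s = 2\beta$, then $\kappa$ divides $\beta^2$ and \[ \beta^3 + 64 = (\beta\kappa m^2 - 8)(\beta\kappa n^2 - 8). \] If $\kappa^2 m^2 n^2 - s \geq 2\beta$, then $\beta^3 + 64 \geq (\beta\kappa m^2 - 8)(\beta\kappa n^2 - 8)$. *)

From Stdlib Require Import ZArith.

(** With A = k^2 m^2 n^2 and Q = k (m^2 + n^2) the hypothesis reads
    A^2 - s^2 = 32 Q, and expanding the product gives
    beta^3 + 64 - (beta k m^2 - 8)(beta k n^2 - 8) = beta (beta^2 - beta A + 8 Q),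
    where 4 (beta^2 - beta A + 8 Q) = (A - 2 beta)^2 - s^2.  This difference of
    squares vanishes when A - s = 2 beta and is nonnegative when A - s >= 2 beta.
    In the first case beta^2 = beta A - 8 Q, a multiple of k. *)

From Stdlib Require Import ZArith Lia.
Open Scope Z_scope.

Section QuadraticGap.

Variables A Q s : Z.
Hypothesis hdiff : A^2 - s^2 = 32 * Q.

Lemma quadratic_gap_sq_diff (b : Z) :
  4 * (b^2 - b * A + 8 * Q) = (A - 2 * b)^2 - s^2.
Proof. nia. Qed.

Lemma quadratic_gap_eq0 (b : Z) : A - s = 2 * b -> b^2 - b * A + 8 * Q = 0.
Proof.
  intros hb.
  assert (hroot : A - 2 * b = s) by lia.
  pose proof (quadratic_gap_sq_diff b) as hsq.
  rewrite hroot in hsq.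
  lia.
Qed.

Lemma quadratic_gap_ge0 (b : Z) :
  0 <= s -> 2 * b <= A - s -> 0 <= b^2 - b * A + 8 * Q.
Proof.
  intros hs hb.
  assert (hsq : s^2 <= (A - 2 * b)^2)
    by (apply Z.pow_le_mono_l; lia).
  pose proof (quadratic_gap_sq_diff b).
  lia.
Qed.

End QuadraticGap.

Lemma cube_add64_sub_product (b k m n : Z) :
  b^3 + 64 - (b * k * m^2 - 8) * (b * k * n^2 - 8)
  = b * (b^2 - b * (k^2 * m^2 * n^2) + 8 * (k * (m^2 + n^2))).
Proof. ring. Qed.

Theorem lemma2 (k m n s beta : Z)
  (hk : 0 < k) (hm : 0 < m) (hn : 0 < n) (hs : 0 <= s)
  (hkey : k^4 * m^4 * n^4 - 32 * k * (m^2 + n^2) = s^2)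
  (hbeta : 0 < beta) :
  (k^2 * m^2 * n^2 - s = 2 * beta ->
     (k | beta^2) /\
     beta^3 + 64 = (beta * k * m^2 - 8) * (beta * k * n^2 - 8)) /\
  (k^2 * m^2 * n^2 - s >= 2 * beta ->
     beta^3 + 64 >= (beta * k * m^2 - 8) * (beta * k * n^2 - 8)).
Proof.
  assert (hdiff : (k^2 * m^2 * n^2)^2 - s^2 = 32 * (k * (m^2 + n^2))).
  { rewrite <- hkey. ring. }
  pose proof (cube_add64_sub_product beta k m n) as hgap.
  split.
  - intros hb.
    pose proof (quadratic_gap_eq0 _ _ _ hdiff beta hb) as hzero.
    split.
    + exists (beta * k * m^2 * n^2 - 8 * (m^2 + n^2)).
      rewrite <- (Z.sub_0_r (beta^2)), <- hzero.
      ring.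
    + rewrite hzero in hgap. lia.
  - intros hb.
    pose proof (quadratic_gap_ge0 _ _ _ hdiff beta hs ltac:(lia)) as hpos.
    pose proof (Z.mul_nonneg_nonneg _ _ (Z.lt_le_incl _ _ hbeta) hpos).
    lia.
Qed.
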